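(* Tight GFG-NCWs are weak-type: every tight GFG-NCW $\mathcal{A}=\langle\Sigma,Q,Q_0,\delta,\alpha\rangle$ whose language is recognized by some GFG-NWW has an equivalent GFG-NWW on the same structure, i.e. there is $\alpha'\subseteq Q$ such that $\langle\Sigma,Q,Q_0,\delta,\alpha'\rangle$ is a weak automaton, is GFG, and recognizes $L(\mathcal{A})$.
   Context: An automaton $\langle\Sigma,Q,Q_0,\delta,\alpha\rangle$ has $\delta:Q\times\Sigma\to2^Q$; runs are accepting if the set $S$ of infinitely visited states satisfies $\alpha$: co-Büchi ($\alpha\subseteq Q$): $S\cap\alpha=\emptyset$; Büchi: $S\cap\alpha\ne\emptyset$. A Büchi automaton is weak if every strongly connected component $C$ of its state graph satisfies $C\subseteq\alpha$ or $C\cap\alpha=\emptyset$ (it may equivalently be viewed as a co-Büchi automaton with rejecting set $Q\setminus\alpha$). NCW: nondeterministic co-Büchi word automaton; NWW: nondeterministic weak word automaton. $\mathcal{A}$ is GFG if there is a strategy $g:\Sigma^*\to Q$ such that for every $w=a_1a_2\cdots$, $g(\epsilon),g(a_1),g(a_1a_2),\ldots$ is a run on $w$, accepting whenever $w\in L(\mathcal{A})$. Finite-state strategies are transducers $g=\langle\Sigma,Q,M,m_0,\rho,\tau\rangle$ (finite memories $M$, $\rho:M\times\Sigma\to M$ extended to words from $m_0$, $\tau:M\to Q$, $g(u)=\tau(\rho(u))$); $m$ is a memory of $q$ if $\tau(m)=q$. $\mathcal{A}_g=\langle\Sigma,M,m_0,\rho,\alpha_g\rangle$ with $\alpha_g=\{m\mid\tau(m)\in\alpha\}$.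 A transition $\langle q,a,q'\rangle$ is used by $g$ if $q=g(u)$, $q'=g(ua)$ for some $u$. A combination of paths from a set $P$ of finite paths is the union of the element sets of a nonempty subset of $P$. For memories $m\neq m'$ with $\tau(m)=\tau(m')$, $m$ is replaceable by $m'$ if the set of paths of $\mathcal{A}_g$ from $m'$ to $m$ is empty or all its combinations are accepting. $\mathcal{A}$ is tight if for some finite-state strategy $g$ witnessing its GFGness, every transition is used by $g$ and no memory is replaceable by a different memory of the same state. *)

From mathcomp Require Import all_boot.
Set Implicit Arguments. Unset Strict Implicit. Unset Printing Implicit Defensive.

Section Automata.
Variables (Sigma Q : finType).

Definition word := nat -> Sigma.

(* Prefix a_1 ... a_n of w (0-indexed: w 0 ... w (n-1)). *)
Definition prefix (w : word) (n : nat) : seq Sigma := mkseq w n.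

Definition is_run (Q0 : {set Q}) (delta : Q -> Sigma -> {set Q})
  (w : word) (r : nat -> Q) : Prop :=
  r 0 \in Q0 /\ forall i, r i.+1 \in delta (r i) (w i).

Definition inf_often (r : nat -> Q) (q : Q) : Prop :=
  forall n, exists m, n <= m /\ r m = q.

Definition coBuchi_acc (alpha : {set Q}) (r : nat -> Q) : Prop :=
  forall q, q \in alpha -> ~ inf_often r q.

Definition Buchi_acc (alpha : {set Q}) (r : nat -> Q) : Prop :=
  exists q, q \in alpha /\ inf_often r q.

Definition lang (Q0 : {set Q}) (delta : Q -> Sigma -> {set Q})
  (acc : (nat -> Q) -> Prop) (w : word) : Prop :=
  exists r, is_run Q0 delta w r /\ acc r.

Definition GFG_strategy (Q0 : {set Q}) (delta : Q -> Sigma -> {set Q})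
  (acc : (nat -> Q) -> Prop) (g : seq Sigma -> Q) : Prop :=
  forall w : word,
    is_run Q0 delta w (fun n => g (prefix w n)) /\
    (lang Q0 delta acc w -> acc (fun n => g (prefix w n))).

Definition is_GFG (Q0 : {set Q}) (delta : Q -> Sigma -> {set Q})
  (acc : (nat -> Q) -> Prop) : Prop :=
  exists g, GFG_strategy Q0 delta acc g.

Definition state_edge (delta : Q -> Sigma -> {set Q}) : rel Q :=
  fun q q' => [exists a, q' \in delta q a].

Definition is_weak (delta : Q -> Sigma -> {set Q}) (alpha : {set Q}) : Prop :=
  forall q q', connect (state_edge delta) q q' -> connect (state_edge delta) q' q ->
    (q \in alpha) = (q' \in alpha).

End Automata.

(* Finite-state strategies (transducers) <Sigma,Q,M,m0,rho,tau>. *)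
Section Transducer.
Variables (Sigma Q M : finType) (m0 : M) (rho : M -> Sigma -> M) (tau : M -> Q).

Definition rho_star (u : seq Sigma) : M := foldl rho m0 u.

Definition strat (u : seq Sigma) : Q := tau (rho_star u).

Definition trans_used (q : Q) (a : Sigma) (q' : Q) : Prop :=
  exists u, strat u = q /\ strat (rcons u a) = q'.

Definition Ag_path (m' m : M) (p : seq M) : Prop :=
  exists p', p = m' :: p' /\ last m' p' = m /\
    forall i, i < size p' ->
      exists a, nth m' p i.+1 = rho (nth m' p i) a.

Definition combination (P : seq M -> Prop) (S : {set M}) : Prop :=
  exists P' : seq M -> Prop,
    (forall p, P' p -> P p) /\ (exists p, P' p) /\
    (forall x, x \in S <-> exists p, P' p /\ x \in p).

(* alpha_g = { m | tau m \in alpha }; A_g is co-Buchi, so a set S of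
   memories is accepting iff S \cap alpha_g = empty. *)
Definition alpha_g (alpha : {set Q}) : {set M} := [set m | tau m \in alpha].

Definition coBuchi_set_acc (alpha : {set Q}) (S : {set M}) : Prop :=
  [disjoint S & alpha_g alpha].

Definition replaceable (alpha : {set Q}) (m m' : M) : Prop :=
  m != m' /\ tau m = tau m' /\
  ((forall p, ~ Ag_path m' m p) \/
   (forall S, combination (Ag_path m' m) S -> coBuchi_set_acc alpha S)).

End Transducer.

Definition tight (Sigma Q : finType) (Q0 : {set Q})
  (delta : Q -> Sigma -> {set Q}) (alpha : {set Q}) : Prop :=
  exists (M : finType) (m0 : M) (rho : M -> Sigma -> M) (tau : M -> Q),
    GFG_strategy Q0 delta (coBuchi_acc alpha) (strat m0 rho tau) /\
    (forall q a q', q' \in delta q a -> trans_used m0 rho tau q a q') /\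
    (forall m m', ~ replaceable rho tau alpha m m').

From Pilot Require Import Defs.
From mathcomp Require Import all_boot.
From Stdlib Require Import Classical ClassicalEpsilon.

Set Implicit Arguments.
Unset Strict Implicit.
Unset Printing Implicit Defensive.

(** The weak condition is alpha' = the states whose SCC contains no alpha-state.
  A run visiting alpha' infinitely often ends in an SCC avoiding alpha, so it is
  co-Büchi accepting; hence alpha' only accepts words of L(A), and it remains to
  see that the run of the tight GFG strategy g on a word of L(A) visits alpha'
  infinitely often.  If not, some memory m recurs on it, closing a loop r that
  avoids alpha, while tau m shares its SCC with an alpha-state.  Tightness lifts
  this SCC to memories: every transition is used by g, and two memories of the
  same state reach each other (otherwise one would be replaceable by the other),
  so there is a memory x with tau x in alpha on a cycle m -s1-> x -s2-> m.
  Every u r^omega with g in m after u is in L(A), so a GFG Büchi strategy for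
  L(A) visits beta inside some finite power of r; interleaving such powers with
  s1 s2 yields a word of L(A) on which g visits x infinitely often, which
  contradicts the GFGness of g. *)

Section InfinitelyOften.
Variables (T : finType) (r : nat -> T).

Lemma inf_often_cofinal (A : {set T}) :
  (forall n, exists2 m, n <= m & r m \in A) -> exists2 q, q \in A & inf_often r q.
Proof.
suff cofinal_seq (s : seq T) : (forall n, exists2 m, n <= m & r m \in s) ->
    exists2 q, q \in s & inf_often r q.
  move=> cofA; have [n|q] := cofinal_seq (enum A).
    by have [m le_nm Am] := cofA n; exists m; rewrite ?mem_enum.
  by rewrite mem_enum; exists q.
elim: s => [|x s IHs] cof; first by have [] := cof 0.
have [x_inf|x_fin] := classic (inf_often r x); first by exists x; rewrite ?mem_head.
have [N r_neq_x] : exists N, forall m, N <= m -> r m != x.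
  apply: NNPP => noN; apply: x_fin => n.
  apply: NNPP => no_m; apply: noN; exists n => m le_nm; apply/eqP => rmx.
  by apply: no_m; exists m.
have [n|q sq q_inf] := IHs; last by exists q; rewrite // inE sq orbT.
have [m] := cof (maxn n N); rewrite geq_max => /andP[le_nm le_Nm].
by rewrite inE (negPf (r_neq_x m le_Nm)); exists m.
Qed.

Lemma coBuchi_acc_eventually (alpha : {set T}) :
  coBuchi_acc alpha r -> exists N, forall n, N <= n -> r n \notin alpha.
Proof.
move=> acc; apply: NNPP => noN.
have [n|q alpha_q] := @inf_often_cofinal alpha; last exact: acc.
apply: NNPP => no_m; apply: noN; exists n => m le_nm; apply/negP => alpha_m.
by apply: no_m; exists m.
Qed.

End InfinitelyOften.

Lemma mkseqD (T : Type) (f : nat -> T) m n :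
  mkseq f (m + n) = mkseq f m ++ mkseq (fun i => f (m + i)) n.
Proof. by rewrite /mkseq iotaD map_cat add0n -{2}(addn0 m) iotaDl -map_comp. Qed.

Lemma take_mkseq (T : Type) (f : nat -> T) k n :
  take k (mkseq f n) = mkseq f (minn k n).
Proof. by rewrite /mkseq -map_take take_iota. Qed.

Section LimitWord.
Variables (Sigma : finType) (d : Sigma).

(* [d] is a dummy default: once [i <= size (f i)] for all [i], position [n]
   lies within [f n.+1]. *)
Definition limw (f : nat -> seq Sigma) : word Sigma := fun n => nth d (f n.+1) n.

Lemma prefix_limw (f : nat -> seq Sigma) :
  (forall i, seq.prefix (f i) (f i.+1)) -> (forall i, i <= size (f i)) ->
  forall n i, n <= size (f i) -> Defs.prefix (limw f) n = take n (f i).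
Proof.
move=> f_incr f_big n i le_n_fi.
have f_mono := homo_leq (@prefix_refl _) (@prefix_trans _) f_incr.
apply: (@eq_from_nth _ d); first by rewrite size_mkseq size_takel.
rewrite size_mkseq => k lt_kn; rewrite nth_mkseq // nth_take //.
have nth_max j : j <= maxn i k.+1 -> k < size (f j) ->
    nth d (f j) k = nth d (f (maxn i k.+1)) k.
  by move=> /f_mono/prefixP[s ->] lt_k; rewrite nth_cat lt_k.
rewrite /limw (nth_max i) ?(nth_max k.+1) ?leq_maxl ?leq_maxr ?f_big //.
exact: leq_trans lt_kn le_n_fi.
Qed.

Definition rep (r : seq Sigma) (i : nat) : seq Sigma := iter i (cat^~ r) [::].

Lemma repS r i : rep r i.+1 = rep r i ++ r.
Proof. by []. Qed.

Lemma size_rep r i : size (rep r i) = i * size r.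
Proof. by elim: i => //= i IHi; rewrite size_cat IHi mulSn addnC. Qed.

Lemma foldl_rep (S : Type) (op : S -> Sigma -> S) x r i :
  foldl op x r = x -> foldl op x (rep r i) = x.
Proof. by move=> loop; elim: i => //= i IHi; rewrite foldl_cat IHi. Qed.

Lemma foldl_take_rep (S : Type) (op : S -> Sigma -> S) (P : S -> Prop) x r :
  (forall j, P (foldl op x (take j r))) -> foldl op x r = x ->
  forall i j, P (foldl op x (take j (rep r i))).
Proof.
move=> P_r loop; elim=> [|i IHi] j; first by have := P_r 0; rewrite take0.
by rewrite repS take_cat; case: ifP => _; rewrite ?foldl_cat ?foldl_rep.
Qed.

Lemma leq_size_pumped v r i : 0 < size r -> i <= size (v ++ rep r i).
Proof.
by move=> r_gt0; rewrite size_cat size_rep (leq_trans (leq_pmulr i r_gt0)) ?leq_addl.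
Qed.

Lemma prefix_limw_rep v r : 0 < size r -> forall n i, n <= size (v ++ rep r i) ->
  Defs.prefix (limw (fun i => v ++ rep r i)) n = take n (v ++ rep r i).
Proof.
move=> r_gt0; apply: prefix_limw => i; first by rewrite repS catA prefix_prefix.
exact: leq_size_pumped.
Qed.

End LimitWord.

Lemma run_connect (Sigma Q : finType) (delta : Q -> Sigma -> {set Q})
    (w : word Sigma) (r : nat -> Q) :
  (forall i, r i.+1 \in delta (r i) (w i)) ->
  forall i j, i <= j -> connect (state_edge delta) (r i) (r j).
Proof.
move=> step.
apply: (homo_leq (f := r) (r := connect (state_edge delta))) => [x|y x z|i].
- exact: connect0.
- exact: connect_trans.
- by apply: connect1; apply/existsP; exists (w i).
Qed.

Section SccAvoiding.
Variables (Sigma Q : finType) (delta : Q -> Sigma -> {set Q}) (alpha : {set Q}).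
Local Notation reach := (connect (state_edge delta)).

Definition scc_avoiding : {set Q} :=
  [set q | [forall (p | p \in alpha), ~~ (reach q p && reach p q)]].

Lemma scc_avoiding_weak : is_weak delta scc_avoiding.
Proof.
suff sub q q' : reach q q' -> reach q' q -> q \in scc_avoiding -> q' \in scc_avoiding.
  by move=> q q' qq' q'q; apply/idP/idP; apply: sub.
move=> qq' q'q; rewrite !inE => /forall_inP avoid; apply/forall_inP => p alpha_p.
apply: contra (avoid p alpha_p) => /andP[q'p pq'].
by rewrite (connect_trans qq' q'p) (connect_trans pq' q'q).
Qed.

Lemma Buchi_scc_avoiding_coBuchi (w : word Sigma) (r : nat -> Q) :
  (forall i, r i.+1 \in delta (r i) (w i)) ->
  Buchi_acc scc_avoiding r -> coBuchi_acc alpha r.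
Proof.
move=> step [q [avoid_q q_inf]] p alpha_p p_inf.
have [i [_ ri]] := q_inf 0; have [j [le_ij rj]] := p_inf i.
have [k [le_jk rk]] := q_inf j.
move: avoid_q; rewrite inE => /forall_inP/(_ p alpha_p)/negP; apply.
by rewrite -rj -{1}ri -rk (run_connect step le_ij) (run_connect step le_jk).
Qed.

End SccAvoiding.

Section TightStrategy.
Variables (Sigma Q M : finType) (delta : Q -> Sigma -> {set Q}) (alpha : {set Q}).
Variables (m0 : M) (rho : M -> Sigma -> M) (tau : M -> Q).

Definition mem_edge : rel M := fun m m' => [exists a, m' == rho m a].

Lemma connect_mem_edge_word m m' :
  connect mem_edge m m' -> exists s, foldl rho m s = m'.
Proof.
case/connectP => p; elim: p m => [|y p IHp] m /=; first by exists [::].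
case/andP => /existsP[a /eqP->] /IHp/[apply] -[s <-].
by exists (a :: s).
Qed.

Lemma avoiding_loop (w : word Sigma) N m :
  (forall n, N <= n -> tau (foldl rho m0 (Defs.prefix w n)) \notin alpha) ->
  inf_often (fun n => foldl rho m0 (Defs.prefix w n)) m ->
  exists u r, [/\ foldl rho m0 u = m, 0 < size r, foldl rho m r = m &
                 forall j, tau (foldl rho m (take j r)) \notin alpha].
Proof.
move=> avoid m_inf; have [n1 [le_Nn1 mu_n1]] := m_inf N.
have [n2 [lt_n12 mu_n2]] := m_inf n1.+1.
have foldl_shift k : foldl rho m (mkseq (fun i => w (n1 + i)) k) =
    foldl rho m0 (Defs.prefix w (n1 + k)).
  by rewrite -mu_n1 /Defs.prefix mkseqD foldl_cat.
exists (Defs.prefix w n1), (mkseq (fun i => w (n1 + i)) (n2 - n1)); split => //.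
- by rewrite size_mkseq subn_gt0.
- by rewrite foldl_shift subnKC ?mu_n2 // ltnW.
- move=> j; rewrite take_mkseq foldl_shift; apply: avoid.
  exact: leq_trans le_Nn1 (leq_addr _ _).
Qed.

Hypothesis all_used : forall q a q', q' \in delta q a -> trans_used m0 rho tau q a q'.
Hypothesis none_replaceable : forall m m', ~ replaceable rho tau alpha m m'.

Lemma same_state_connect m m' : tau m = tau m' -> connect mem_edge m m'.
Proof.
have [->|neq_mm' tau_mm'] := eqVneq m m'; first by rewrite connect0.
apply: NNPP => no_path; apply: (@none_replaceable m' m).
do !split; [by rewrite eq_sym | by rewrite tau_mm' | left].
move=> p [p' [-> [last_p' step]]].
apply: no_path; apply/connectP; exists p'; last by rewrite last_p'.
apply/(pathP m) => i lt_i; have [a /= step_i] := step i lt_i.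
by apply/existsP; exists a; rewrite step_i.
Qed.

Lemma connect_memory_of_state q q' : connect (state_edge delta) q q' ->
  forall m, tau m = q -> exists2 m', tau m' = q' & connect mem_edge m m'.
Proof.
case/connectP => p + ->; elim: p q => [|q'' p IHp] q /=.
  by move=> _ m tau_m; exists m; rewrite ?connect0.
move=> /andP[qq'' p_path] m tau_m.
have /existsP[a /all_used[u [gu gua]]] := qq''.
have [|m' tau_m' m''m'] := IHp q'' p_path (rho (foldl rho m0 u) a).
  by rewrite -gua /strat /rho_star foldl_rcons.
exists m' => //; apply: connect_trans (same_state_connect _) (connect_trans _ m''m').
  by rewrite tau_m -gu.
by apply: connect1; apply/existsP; exists a.
Qed.

Lemma scc_memory_detour m q :
  connect (state_edge delta) (tau m) q -> connect (state_edge delta) q (tau m) ->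
  exists x s1 s2, [/\ tau x = q, foldl rho m s1 = x & foldl rho x s2 = m].
Proof.
move=> mq qm; have [x tau_x mx] := connect_memory_of_state mq (erefl _).
have [y tau_y xy] := connect_memory_of_state qm tau_x.
have [s1 m_to_x] := connect_mem_edge_word mx.
have [s2 x_to_m] := connect_mem_edge_word (connect_trans xy (same_state_connect tau_y)).
by exists x, s1, s2.
Qed.

End TightStrategy.

Section Pumping.
Variables (Sigma Q M Q' : finType) (d : Sigma).
Variables (Q0 : {set Q}) (delta : Q -> Sigma -> {set Q}) (alpha : {set Q}).
Variables (m0 : M) (rho : M -> Sigma -> M) (tau : M -> Q).
Variables (Q0' : {set Q'}) (delta' : Q' -> Sigma -> {set Q'}) (beta : {set Q'}).
Variable G : seq Sigma -> Q'.
Local Notation g := (strat m0 rho tau).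
Local Notation L := (lang Q0 delta (coBuchi_acc alpha)).

Hypothesis g_GFG : GFG_strategy Q0 delta (coBuchi_acc alpha) g.
Hypothesis G_GFG : GFG_strategy Q0' delta' (Buchi_acc beta) G.
Hypothesis same_lang : forall w, lang Q0' delta' (Buchi_acc beta) w <-> L w.

Variables (m x : M) (u0 r s1 s2 : seq Sigma).
Hypotheses (reach_m : foldl rho m0 u0 = m) (r_gt0 : 0 < size r).
Hypotheses (loop_r : foldl rho m r = m)
  (avoid_r : forall j, tau (foldl rho m (take j r)) \notin alpha).
Hypotheses (m_to_x : foldl rho m s1 = x) (x_to_m : foldl rho x s2 = m)
  (alpha_x : tau x \in alpha).

Lemma lang_pumped v : foldl rho m0 v = m -> L (limw d (fun i => v ++ rep r i)).
Proof.
move=> reach_v; exists (fun n => g (Defs.prefix (limw d (fun i => v ++ rep r i)) n)).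
split=> [|q alpha_q q_inf]; first exact: (g_GFG _).1.
have [n [le_vn gn]] := q_inf (size v); move: alpha_q; rewrite -gn /=.
rewrite (prefix_limw_rep d (v := v) r_gt0 (leq_size_pumped v n r_gt0)).
rewrite take_cat ltnNge le_vn /strat /rho_star foldl_cat reach_v.
apply/negP; exact: (foldl_take_rep (P := fun s => tau s \notin alpha)).
Qed.

Definition hits_beta v k := exists2 j, size v < j <= size (v ++ rep r k) &
  G (take j (v ++ rep r k)) \in beta.

Lemma hits_beta_exists v : foldl rho m0 v = m -> exists k, hits_beta v k.
Proof.
move=> reach_v.
have [q [beta_q q_inf]] := (G_GFG _).2 (proj2 (same_lang _) (lang_pumped reach_v)).
have [j [lt_vj Gj]] := q_inf (size v).+1.
exists j, j; first by rewrite lt_vj leq_size_pumped.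
by rewrite -(prefix_limw_rep d (v := v) r_gt0 (leq_size_pumped v j r_gt0)) Gj.
Qed.

Definition loops v := epsilon (inhabits 0) (hits_beta v).

Fixpoint detours i :=
  if i is i.+1 then detours i ++ rep r (loops (detours i)) ++ s1 ++ s2 else u0.

Lemma foldl_detours i : foldl rho m0 (detours i) = m.
Proof. by elim: i => //= i IHi; rewrite !foldl_cat IHi foldl_rep // m_to_x. Qed.

Lemma hits_beta_detours i : hits_beta (detours i) (loops (detours i)).
Proof. exact: epsilon_spec (hits_beta_exists (foldl_detours i)). Qed.

Lemma leq_size_detours i : i <= size (detours i).
Proof.
have s_gt0 : 0 < size (s1 ++ s2).
  case: s1 m_to_x => //= m_eq_x.
  by move: (avoid_r 0); rewrite take0 /= m_eq_x alpha_x.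
elim: i => //= i IHi; rewrite !size_cat -addn1 leq_add //.
by rewrite (leq_trans s_gt0) // -size_cat leq_addl.
Qed.

Lemma prefix_limw_detours n i :
  n <= size (detours i) -> Defs.prefix (limw d detours) n = take n (detours i).
Proof.
apply: prefix_limw => [j|]; last exact: leq_size_detours.
by rewrite [detours j.+1]/= prefix_prefix.
Qed.

Lemma lang_limw_detours : L (limw d detours).
Proof.
apply/same_lang; set run := fun n => G (Defs.prefix (limw d detours) n).
exists run; split; first exact: (G_GFG _).1.
have [n|q beta_q q_inf] := @inf_often_cofinal _ run beta; last by exists q.
have [j /andP[lt_j le_j] beta_j] := hits_beta_detours n.
exists j; first exact: leq_trans (leq_size_detours n) (ltnW lt_j).
have le_j' : j <= size (detours n.+1).
  by rewrite /= catA size_cat (leq_trans le_j) ?leq_addr.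
by rewrite /run (prefix_limw_detours le_j') /= catA takel_cat.
Qed.

Lemma strat_limw_detours_visits :
  inf_often (fun n => g (Defs.prefix (limw d detours) n)) (tau x).
Proof.
move=> n; set t := detours n ++ rep r (loops (detours n)) ++ s1.
have dt : detours n.+1 = t ++ s2 by rewrite /t /= !catA.
have le_t : size t <= size (detours n.+1) by rewrite dt size_cat leq_addr.
exists (size t); split.
  by rewrite /t size_cat (leq_trans (leq_size_detours n)) ?leq_addr.
rewrite /= (prefix_limw_detours le_t) dt take_size_cat //.
by rewrite /strat /rho_star /t !foldl_cat foldl_detours (foldl_rep _ loop_r) m_to_x.
Qed.

Lemma no_rejecting_detour : False.
Proof.
exact: (g_GFG _).2 lang_limw_detours (tau x) alpha_x strat_limw_detours_visits.
Qed.

End Pumping.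

Section Completeness.
Variables (Sigma Q M Q' : finType).
Variables (Q0 : {set Q}) (delta : Q -> Sigma -> {set Q}) (alpha : {set Q}).
Variables (m0 : M) (rho : M -> Sigma -> M) (tau : M -> Q).
Variables (Q0' : {set Q'}) (delta' : Q' -> Sigma -> {set Q'}) (beta : {set Q'}).
Variable G : seq Sigma -> Q'.
Local Notation g := (strat m0 rho tau).
Local Notation L := (lang Q0 delta (coBuchi_acc alpha)).

Hypothesis g_GFG : GFG_strategy Q0 delta (coBuchi_acc alpha) g.
Hypothesis all_used : forall q a q', q' \in delta q a -> trans_used m0 rho tau q a q'.
Hypothesis none_replaceable : forall m m', ~ replaceable rho tau alpha m m'.
Hypothesis G_GFG : GFG_strategy Q0' delta' (Buchi_acc beta) G.
Hypothesis same_lang : forall w, lang Q0' delta' (Buchi_acc beta) w <-> L w.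

Lemma strat_Buchi_scc_avoiding w :
  L w -> Buchi_acc (scc_avoiding delta alpha) (fun n => g (Defs.prefix w n)).
Proof.
move=> Lw; apply: NNPP => not_acc.
have [N avoid] := coBuchi_acc_eventually ((g_GFG w).2 Lw).
set mem_run := fun n => foldl rho m0 (Defs.prefix w n).
have [|m _ m_inf] := @inf_often_cofinal _ mem_run setT.
  by move=> n; exists n; rewrite ?inE.
have [u0 [r [reach_m r_gt0 loop_r avoid_r]]] := avoiding_loop avoid m_inf.
have : tau m \notin scc_avoiding delta alpha.
  apply: contra_notN not_acc => avoid_m; exists (tau m); split => // n.
  by have [j [le_nj mj]] := m_inf n; exists j; rewrite -mj.
rewrite inE negb_forall_in => /exists_inP[q alpha_q /negPn/andP[mq qm]].
have [x [s1 [s2 [xq m_to_x x_to_m]]]] :=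
  scc_memory_detour all_used none_replaceable mq qm.
apply: (no_rejecting_detour (w 0) g_GFG G_GFG same_lang reach_m r_gt0 loop_r
  avoid_r m_to_x x_to_m).
by rewrite xq.
Qed.

End Completeness.

Theorem theorem18 (Sigma Q : finType) (Q0 : {set Q})
  (delta : Q -> Sigma -> {set Q}) (alpha : {set Q}) :
  (* A is a tight GFG-NCW *)
  tight Q0 delta alpha ->
  (* L(A) is recognized by some GFG-NWW *)
  (exists (Q' : finType) (Q0' : {set Q'}) (delta' : Q' -> Sigma -> {set Q'})
          (beta : {set Q'}),
      is_weak delta' beta /\ is_GFG Q0' delta' (Buchi_acc beta) /\
      forall w, lang Q0' delta' (Buchi_acc beta) w <->
                lang Q0 delta (coBuchi_acc alpha) w) ->
  exists alpha' : {set Q},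
    is_weak delta alpha' /\ is_GFG Q0 delta (Buchi_acc alpha') /\
    forall w, lang Q0 delta (Buchi_acc alpha') w <->
              lang Q0 delta (coBuchi_acc alpha) w.
Proof.
move=> [M [m0 [rho [tau [g_GFG [all_used none_replaceable]]]]]].
move=> [Q' [Q0' [delta' [beta [_ [[G G_GFG] same_lang]]]]]].
have sound w : lang Q0 delta (Buchi_acc (scc_avoiding delta alpha)) w ->
    lang Q0 delta (coBuchi_acc alpha) w.
  case=> r [run_r acc_r]; exists r; split => //.
  exact: Buchi_scc_avoiding_coBuchi run_r.2 acc_r.
have complete :=
  strat_Buchi_scc_avoiding g_GFG all_used none_replaceable G_GFG same_lang.
exists (scc_avoiding delta alpha); split; first exact: scc_avoiding_weak.
split.
  by exists (strat m0 rho tau) => w; split; [exact: (g_GFG w).1 | move/sound/complete].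
move=> w; split; first exact: sound.
by move=> Lw; eexists; split; [exact: (g_GFG w).1 | exact: complete].
Qed.
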